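(* Consider the following optical-network model. Each link $k$ has a set $A_k\subseteq\mathbb{Z}$ of available units. Each trait $t$ has a resource $\mathrm{RI}(t)$, a nonempty integer interval, and for each link $k$ the set $t\oplus k$ of derived traits satisfies: every $t'\in t\oplus k$ has $\mathrm{RI}(t')$ a maximal integer interval contained in $\mathrm{RI}(t)\cap A_k$, and for every maximal integer interval $J\subseteq \mathrm{RI}(t)\cap A_k$ there is $t'\in t\oplus k$ with $\mathrm{RI}(t')=J$. Fix a link $k$ leaving a node $n$, and for a label $l=(t_1,t_2)$ whose both routes end at $n$ let $l\oplus e=\{(t,t_2): t\in t_1\oplus k\}\cup\{(t,t_1): t\in t_2\oplus k\}$ (the link may be appended to either route; afterwards the routes end at different nodes). Let $\mathrm{cost}$ be a real-valued function on labels such that for any labels $l_i,l_j$: if $\mathrm{cost}(l_i)\le\mathrm{cost}(l_j)$ then $\mathrm{cost}(l')\le\mathrm{cost}(l)$ for all $l'\in l_i\oplus e$ and all $l\in l_j\oplus e$. Let $l_i=(t_i,t'_i)$, $l_j=(t_j,t'_j)$ be labels whose routes all end at $n$. If $l_i\preceq'_{=} l_j$, then for every $l\in l_j\oplus e$ there exists $l'\in l_i\oplus e$ with $l'\preceq'_{\ne} l$.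
   Context: A trait describes a route in an optical network with its cost and the interval of contiguous units available along it; a label is a pair of traits of two link-disjoint routes. For labels $l_i=(t_i,t'_i)$, $l_j=(t_j,t'_j)$ with both routes ending at the same node: $\mathrm{RI}(l_i)\supseteq_n\mathrm{RI}(l_j)$ iff $\mathrm{RI}(t_i)\supseteq\mathrm{RI}(t_j)$ and $\mathrm{RI}(t'_i)\supseteq\mathrm{RI}(t'_j)$; $\mathrm{RI}(l_i)\supseteq_x\mathrm{RI}(l_j)$ iff $\mathrm{RI}(t_i)\supseteq\mathrm{RI}(t'_j)$ and $\mathrm{RI}(t'_i)\supseteq\mathrm{RI}(t_j)$; $l_i\preceq'_= l_j$ iff $\mathrm{cost}(l_i)\le\mathrm{cost}(l_j)$ and ($\mathrm{RI}(l_i)\supseteq_n\mathrm{RI}(l_j)$ or $\mathrm{RI}(l_i)\supseteq_x\mathrm{RI}(l_j)$). For labels $(a,b),(c,d)$ with routes ending at different nodes: $(a,b)\preceq'_{\ne}(c,d)$ iff $\mathrm{cost}((a,b))\le\mathrm{cost}((c,d))$, $\mathrm{RI}(a)\supseteq\mathrm{RI}(c)$ and $\mathrm{RI}(b)\supseteq\mathrm{RI}(d)$. *)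

From Stdlib Require Import ZArith Reals.
Open Scope Z_scope.

(* An integer interval [lo, hi] is represented by the pair (lo, hi);
   it is nonempty when lo <= hi. *)
Definition interval := (Z * Z)%type.
Definition nonempty (I : interval) : Prop := fst I <= snd I.
Definition inI (I : interval) (x : Z) : Prop := fst I <= x <= snd I.
Definition subI (I : interval) (S : Z -> Prop) : Prop := forall x, inI I x -> S x.
Definition supI (J I : interval) : Prop := forall x, inI I x -> inI J x.

Definition maximal_interval_in (J : interval) (S : Z -> Prop) : Prop :=
  nonempty J /\ subI J S /\
  (forall J', nonempty J' -> supI J' J -> subI J' S -> J' = J).

Definition label (T : Type) := (T * T)%type.

Definition label_oplus {T : Type} (oplus : T -> T -> Prop) (l l' : label T) : Prop :=
  (exists t, oplus (fst l) t /\ l' = (t, snd l)) \/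
  (exists t, oplus (snd l) t /\ l' = (t, fst l)).

Definition sup_n {T : Type} (RI : T -> interval) (li lj : label T) : Prop :=
  supI (RI (fst li)) (RI (fst lj)) /\ supI (RI (snd li)) (RI (snd lj)).
Definition sup_x {T : Type} (RI : T -> interval) (li lj : label T) : Prop :=
  supI (RI (fst li)) (RI (snd lj)) /\ supI (RI (snd li)) (RI (fst lj)).

(* dominance for labels whose routes end at the same node *)
Definition dom_eq {T : Type} (RI : T -> interval) (cost : label T -> R)
    (li lj : label T) : Prop :=
  (cost li <= cost lj)%R /\ (sup_n RI li lj \/ sup_x RI li lj).

(* dominance for labels whose routes end at different nodes *)
Definition dom_ne {T : Type} (RI : T -> interval) (cost : label T -> R)
    (l1 l2 : label T) : Prop :=
  (cost l1 <= cost l2)%R /\ supI (RI (fst l1)) (RI (fst l2)) /\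
  supI (RI (snd l1)) (RI (snd l2)).

(** Enlarging the resources of both traits of a label can only enlarge the
    resources obtainable by appending the link: every maximal interval of
    [RI(b) ∩ A_k] lies in [RI(a) ∩ A_k] when [RI(a) ⊇ RI(b)], hence extends to
    a maximal interval of the latter, which [⊕] realises by some derived trait.
    Whichever route of [l_j] the link is appended to, appending it to the
    matching route of [l_i] (the same one under [⊇_n], the other one under
    [⊇_x]) gives the dominating label; its cost is controlled by the
    monotonicity hypothesis on [cost]. *)

From Stdlib Require Import ZArith Reals Lia Zwf Classical.

Lemma Z_bounded_below_has_min (P : Z -> Prop) (b x0 : Z) :
  (forall x, P x -> b <= x) -> P x0 ->
  exists m, P m /\ forall y, P y -> m <= y.
Proof.
  intros Hb. revert x0. refine (well_founded_ind (Zwf_well_founded b) _ _).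
  intros x IH Hx.
  destruct (classic (exists y, P y /\ y < x)) as [[y [Hy Hyx]] | Hmin].
  - apply (IH y); [split; [apply Hb, Hx | exact Hyx] | exact Hy].
  - exists x. split; [exact Hx |].
    intros y Hy. apply Z.nlt_ge. intros Hyx. apply Hmin. eauto.
Qed.

Lemma Z_bounded_above_has_max (P : Z -> Prop) (b x0 : Z) :
  (forall x, P x -> x <= b) -> P x0 ->
  exists m, P m /\ forall y, P y -> y <= m.
Proof.
  intros Hb Hx0.
  destruct (Z_bounded_below_has_min (fun y => P (- y)) (- b) (- x0))
    as [m [Hm Hmin]].
  - intros x Hx. specialize (Hb _ Hx). lia.
  - now rewrite Z.opp_involutive.
  - exists (- m). split; [exact Hm |].
    intros y Hy. assert (H := Hmin (- y)). rewrite Z.opp_involutive in H.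
    specialize (H Hy). lia.
Qed.

Lemma maximal_interval_extends (J I : interval) (S : Z -> Prop) :
  nonempty J -> subI J S -> (forall x, S x -> inI I x) ->
  exists J', maximal_interval_in J' S /\ supI J' J.
Proof.
  destruct J as [lo hi].
  unfold maximal_interval_in, nonempty, subI, supI, inI; simpl.
  intros Hne HJ HS.
  destruct (Z_bounded_below_has_min
              (fun x => x <= lo /\ forall z, x <= z <= hi -> S z) (fst I) lo)
    as [lo' [[Hlo' HSlo'] Hlo'_min]].
  { intros x [Hx HSx]. apply (HS x), HSx. lia. }
  { split; [lia | exact HJ]. }
  destruct (Z_bounded_above_has_max
              (fun y => hi <= y /\ forall z, lo' <= z <= y -> S z) (snd I) hi)
    as [hi' [[Hhi' HShi'] Hhi'_max]].
  { intros y [Hy HSy]. apply (HS y), HSy. lia. }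
  { split; [lia | exact HSlo']. }
  exists (lo', hi'); simpl.
  split; [split; [lia | split; [exact HShi' |]] | intros x; lia].
  intros [a c] Hac Hsup HSac; simpl in *.
  assert (Ha : a <= lo') by (destruct (Hsup lo'); lia).
  assert (Hc : hi' <= c) by (destruct (Hsup hi'); lia).
  assert (lo' <= a) by (apply Hlo'_min; split; [lia | intros z Hz; apply HSac; lia]).
  assert (c <= hi') by (apply Hhi'_max; split; [lia | intros z Hz; apply HSac; lia]).
  f_equal; lia.
Qed.

Section AppendLink.

Variables (T : Type) (RI : T -> interval) (A : Z -> Prop) (oplus : T -> T -> Prop).

Hypothesis oplus_maximal : forall t t', oplus t t' ->
  maximal_interval_in (RI t') (fun x => inI (RI t) x /\ A x).
Hypothesis oplus_complete : forall t J,
  maximal_interval_in J (fun x => inI (RI t) x /\ A x) ->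
  exists t', oplus t t' /\ RI t' = J.

Lemma oplus_sup (a b t : T) :
  supI (RI a) (RI b) -> oplus b t ->
  exists t', oplus a t' /\ supI (RI t') (RI t).
Proof.
  intros Hab Hbt.
  destruct (oplus_maximal _ _ Hbt) as [Hne [Hsub _]].
  destruct (maximal_interval_extends (RI t) (RI a)
              (fun x => inI (RI a) x /\ A x)) as [J [HJ HJt]].
  - exact Hne.
  - intros x Hx. destruct (Hsub x Hx). auto.
  - intros x [Hx _]. exact Hx.
  - destruct (oplus_complete _ _ HJ) as [t' [Ht' HRIt']].
    exists t'. rewrite HRIt'. auto.
Qed.

Lemma label_oplus_sup_fst (li : label T) (b c t : T) :
  supI (RI (fst li)) (RI b) -> supI (RI (snd li)) (RI c) -> oplus b t ->
  exists l', label_oplus oplus li l' /\ sup_n RI l' (t, c).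
Proof.
  intros Hb Hc Ht. destruct (oplus_sup _ _ _ Hb Ht) as [t' [Ht' Hs]].
  exists (t', snd li). split; [left; eauto | split; assumption].
Qed.

Lemma label_oplus_sup_snd (li : label T) (b c t : T) :
  supI (RI (snd li)) (RI b) -> supI (RI (fst li)) (RI c) -> oplus b t ->
  exists l', label_oplus oplus li l' /\ sup_n RI l' (t, c).
Proof.
  intros Hb Hc Ht. destruct (oplus_sup _ _ _ Hb Ht) as [t' [Ht' Hs]].
  exists (t', fst li). split; [right; eauto | split; assumption].
Qed.

Lemma label_oplus_sup (li lj l : label T) :
  sup_n RI li lj \/ sup_x RI li lj -> label_oplus oplus lj l ->
  exists l', label_oplus oplus li l' /\ sup_n RI l' l.
Proof.
  intros [[H1 H2] | [H1 H2]] [[t [Ht ->]] | [t [Ht ->]]].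
  - exact (label_oplus_sup_fst _ _ _ _ H1 H2 Ht).
  - exact (label_oplus_sup_snd _ _ _ _ H2 H1 Ht).
  - exact (label_oplus_sup_snd _ _ _ _ H2 H1 Ht).
  - exact (label_oplus_sup_fst _ _ _ _ H1 H2 Ht).
Qed.

End AppendLink.

Theorem proposition6
  (T : Type) (RI : T -> interval)
  (Node : Type) (endn : T -> Node) (n h : Node)
  (A : Z -> Prop) (oplus : T -> T -> Prop)
  (HRI : forall t, nonempty (RI t))
  (Hder1 : forall t t', oplus t t' ->
     maximal_interval_in (RI t') (fun x => inI (RI t) x /\ A x))
  (Hder2 : forall t J, maximal_interval_in J (fun x => inI (RI t) x /\ A x) ->
     exists t', oplus t t' /\ RI t' = J)
  (Hend : forall t t', endn t = n -> oplus t t' -> endn t' = h)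
  (Hnh : n <> h)
  (cost : label T -> R)
  (Hcost : forall li lj, (cost li <= cost lj)%R ->
     forall l' l, label_oplus oplus li l' -> label_oplus oplus lj l ->
       (cost l' <= cost l)%R)
  (li lj : label T)
  (Hi1 : endn (fst li) = n) (Hi2 : endn (snd li) = n)
  (Hj1 : endn (fst lj) = n) (Hj2 : endn (snd lj) = n)
  (Hdom : dom_eq RI cost li lj) :
  forall l, label_oplus oplus lj l ->
    exists l', label_oplus oplus li l' /\ dom_ne RI cost l' l.
Proof.
  intros l Hl.
  destruct Hdom as [Hcost_ij Hsup].
  destruct (label_oplus_sup T RI A oplus Hder1 Hder2 li lj l Hsup Hl)
    as [l' [Hl' [Hfst Hsnd]]].
  exists l'. split; [exact Hl' |].
  split; [exact (Hcost li lj Hcost_ij l' l Hl' Hl) | split; assumption].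
Qed.
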